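(* Let $A$ be an EFO branch such that every finite subset of $A$ has a standard model. Then $A$ has a standard model $\mathcal{I}$ in which $\mathcal{I}\alpha$ is countable for every sort $\alpha$.
   Context: Types: a countable set of base types including a distinguished $o$; other base types are sorts ($\alpha$). Types: base types and $\sigma\tau$ (functions from $\sigma$ to $\tau$; $\sigma\tau\mu=\sigma(\tau\mu)$). Countably many names with unique types, infinitely many per type. Terms: names; $st:\mu$ for $s:\tau\mu,t:\tau$; $\lambda x.t:\sigma\tau$ for a name $x:\sigma$, $t:\tau$. Logical constants: $\neg:oo$, $\to:ooo$, $=_\sigma:\sigma\sigma o$ for every type $\sigma$, and $\forall_\alpha:(\alpha o)o$ for every sort $\alpha$; all other names are variables. Formulas: terms of type $o$; $s\neq_\sigma t$ is $\neg((=_\sigma s)t)$. A term is EFO if the only logical constants occurring in it are $\neg$, $\to$, $=_\alpha$ and $\forall_\alpha$ ($\alpha$ sorts). A formula is quasi-EFO if it is EFO or of the form $s\neq_\sigma t$ with $s,t$ EFO. Semantics: a frame $\mathcal{D}$ maps types to nonempty sets with $\mathcal{D}(\sigma\tau)\subseteq(\mathcal{D}\sigma\to\mathcal{D}\tau)$; standard if $\mathcal{D}(\sigma\tau)=(\mathcal{D}\sigma\to\mathcal{D}\tau)$. An assignment $\mathcal{I}$ into $\mathcal{D}$ extends $\mathcal{D}$ and maps names $x:\sigma$ into $\mathcal{D}\sigma$; $\mathcal{I}^x_a$ is the update. Evaluation: $\hat{\mathcal{I}}x=\mathcal{I}x$; $\hat{\mathcal{I}}(st)=(\hat{\mathcal{I}}s)(\hat{\mathcal{I}}t)$;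 $\hat{\mathcal{I}}(\lambda x.s)=f$ if $\lambda x.s:\sigma\tau$, $f\in\mathcal{D}(\sigma\tau)$ and $\widehat{\mathcal{I}^x_a}s=fa$ for all $a\in\mathcal{D}\sigma$ (total in a standard frame). Logical: $\mathcal{I}o=\{0,1\}$, $\mathcal{I}(\neg)$ negation, $\mathcal{I}(\to)$ implication, $\mathcal{I}(=_\sigma)$ identity, $\mathcal{I}(\forall_\alpha)f=1$ iff $f$ is the constant function $1$. A standard model of a set of formulas is a logical assignment into a standard frame evaluating each of them to $1$. Normalization: fixed type-preserving total $[\cdot]$; $s$ normal iff $[s]=s$; (N1) $[[s]]=[s]$; (N2) $[[s]t]=[st]$; (N3) $[ys_1\dots s_n]=y[s_1]\dots[s_n]$ for a name $y$, $n\ge0$, $ys_1\dots s_n$ of base type; (N4) $\hat{\mathcal{I}}[s]=\hat{\mathcal{I}}s$ for every interpretation (assignment whose evaluation is total). Substitutions: type-preserving partial functions $\theta$ from names to terms ($\theta^x_s$ update), each extending to a type-preserving total $\hat\theta$ with (S1) $\hat\theta x=\theta x$ if $x\in\mathrm{Dom}\theta$, else $x$; (S2) $\hat\theta(st)=(\hat\theta s)(\hat\theta t)$; (S3) $[(\hat\theta(\lambda x.s))t]=[\widehat{\theta^x_t}s]$; (S4) $[\hat\emptyset s]=[s]$. An EFO branch is a set of normal quasi-EFO formulas. *)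

From Stdlib Require Import List PeanoNat.

(* Base types are indexed by nat: TBase 0 is the distinguished type o,
   TBase (S a) is the sort number a. *)
Inductive ty : Type :=
| TBase (b : nat)
| TArr (s t : ty).

Definition o : ty := TBase 0.
Definition sort (a : nat) : ty := TBase (S a).

Definition is_sort (s : ty) : bool :=
  match s with TBase (S _) => true | _ => false end.
Definition is_base (s : ty) : bool :=
  match s with TBase _ => true | _ => false end.

Inductive name : Type :=
| NNeg
| NImp
| NEq (s : ty)
| NAll (a : nat)
| NVar (s : ty) (n : nat).

Definition ntype (x : name) : ty :=
  match x with
  | NNeg => TArr o o
  | NImp => TArr o (TArr o o)
  | NEq s => TArr s (TArr s o)
  | NAll a => TArr (TArr (sort a) o) o
  | NVar s _ => s
  end.

Definition ty_eq_dec (s t : ty) : {s = t} + {s <> t}.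
Proof. decide equality; apply Nat.eq_dec. Defined.

Definition name_eq_dec (x y : name) : {x = y} + {x <> y}.
Proof. decide equality; try apply ty_eq_dec; apply Nat.eq_dec. Defined.

Inductive tm : ty -> Type :=
| TN (x : name) : tm (ntype x)
| TA (s t : ty) : tm (TArr s t) -> tm s -> tm t
| TL (x : name) (t : ty) : tm t -> tm (TArr (ntype x) t).

Arguments TA {s t} _ _.
Arguments TL x {t} _.

Definition neq {s : ty} (a b : tm s) : tm o :=
  @TA o o (TN NNeg) (@TA s o (@TA s (TArr s o) (TN (NEq s)) a) b).

Definition name_efo (x : name) : bool :=
  match x with
  | NEq s => is_sort s
  | _ => true
  end.

(* A name "occurs" in a term also when it occurs as a binder. *)
Fixpoint efo {s : ty} (t : tm s) : bool :=
  match t with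
  | TN x => name_efo x
  | TA u w => efo u && efo w
  | TL x b => name_efo x && efo b
  end.

Definition quasi_efo (f : tm o) : Prop :=
  efo f = true \/
  exists (s : ty) (a b : tm s), efo a = true /\ efo b = true /\ f = neq a b.

(* A frame assigns a nonempty set to every type; D(s t) is (identified,
   via the injective application map) with a set of functions D s -> D t. *)
Record frame : Type := {
  D : ty -> Type;
  D_ne : forall s, inhabited (D s);
  app : forall s t, D (TArr s t) -> D s -> D t;
  app_ext : forall s t (f g : D (TArr s t)),
      (forall a, app s t f a = app s t g a) -> f = g
}.
Arguments app f0 {s t} _ _.

Definition standard (F : frame) : Prop :=
  forall s t (h : D F s -> D F t), exists f : D F (TArr s t), forall a, app F f a = h a.

Definition asg (F : frame) : Type := forall x : name, D F (ntype x).

Definition upd (F : frame) (I : asg F) (x : name) (a : D F (ntype x)) : asg F :=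
  fun y => match name_eq_dec x y with
           | left e => eq_rect x (fun z => D F (ntype z)) a y e
           | right _ => I y
           end.

(* evaluation (a partial function, given as a relation) *)
Inductive ev (F : frame) : asg F -> forall s, tm s -> D F s -> Prop :=
| ev_N (I : asg F) (x : name) : ev F I _ (TN x) (I x)
| ev_A (I : asg F) (s t : ty) (u : tm (TArr s t)) (w : tm s) f a :
    ev F I _ u f -> ev F I _ w a -> ev F I _ (TA u w) (app F f a)
| ev_L (I : asg F) (x : name) (t : ty) (b : tm t) (f : D F (TArr (ntype x) t)) :
    (forall a, ev F (upd F I x a) _ b (app F f a)) -> ev F I _ (TL x b) f.

Definition interp (F : frame) (I : asg F) : Prop :=
  forall s (t : tm s), exists v, ev F I s t v.

(* logical assignment: D o is {0,1} (identified via the bijection tv with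
   bool), and the logical constants get their intended meaning *)
Definition logical (F : frame) (I : asg F) (tv : D F o -> bool) : Prop :=
  (forall v w, tv v = tv w -> v = w) /\ (forall b, exists v, tv v = b) /\
  (forall a, tv (@app F o o (I NNeg) a) = negb (tv a)) /\
  (forall a b, tv (@app F o o (@app F o (TArr o o) (I NImp) a) b) = implb (tv a) (tv b)) /\
  (forall s (a b : D F s),
      tv (@app F s o (@app F s (TArr s o) (I (NEq s)) a) b) = true <-> a = b) /\
  (forall al (f : D F (TArr (sort al) o)),
      tv (@app F (TArr (sort al) o) o (I (NAll al)) f) = true <->
      forall a, tv (app F f a) = true).

Definition std_model (A : tm o -> Prop) (F : frame) (I : asg F) (tv : D F o -> bool) : Prop :=
  standard F /\ logical F I tv /\
  forall f, A f -> exists v, ev F I o f v /\ tv v = true.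

Definition has_std_model (A : tm o -> Prop) : Prop :=
  exists (F : frame) (I : asg F) (tv : D F o -> bool), std_model A F I tv.

Definition countable_type (T : Type) : Prop :=
  exists f : T -> nat, forall x y, f x = f y -> x = y.

Fixpoint head_name {s : ty} (t : tm s) : bool :=
  match t with
  | TN _ => true
  | TA u _ => head_name u
  | TL _ _ => false
  end.

Fixpoint map_args (f : forall s, tm s -> tm s) {s : ty} (t : tm s) : tm s :=
  match t with
  | TN x => TN x
  | TA u w => TA (map_args f u) (f _ w)
  | TL x b => TL x b
  end.

Record normalizer (norm : forall s, tm s -> tm s) : Prop := {
  N1 : forall s (t : tm s), norm s (norm s t) = norm s t;
  N2 : forall s t (u : tm (TArr s t)) (w : tm s), norm t (TA (norm _ u) w) = norm t (TA u w);
  N3 : forall s (t : tm s), is_base s = true -> head_name t = true -> norm s t = map_args norm t;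
  N4 : forall (F : frame) (I : asg F), interp F I ->
       forall s (t : tm s) v, ev F I s (norm s t) v <-> ev F I s t v
}.

Definition normal (norm : forall s, tm s -> tm s) {s : ty} (t : tm s) : Prop := norm s t = t.

Definition subst : Type := forall x : name, option (tm (ntype x)).

Definition supd (th : subst) (x : name) (t : tm (ntype x)) : subst :=
  fun y => match name_eq_dec x y with
           | left e => Some (eq_rect x (fun z => tm (ntype z)) t y e)
           | right _ => th y
           end.

Record subst_op (norm : forall s, tm s -> tm s) (sapp : subst -> forall s, tm s -> tm s) : Prop := {
  S1 : forall th x, sapp th _ (TN x) = match th x with Some t => t | None => TN x end;
  S2 : forall th s t (u : tm (TArr s t)) (w : tm s), sapp th t (TA u w) = TA (sapp th _ u) (sapp th s w);
  S3 : forall th x t (b : tm t) (w : tm (ntype x)),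
       norm t (TA (sapp th _ (TL x b)) w) = norm t (sapp (supd th x w) t b);
  S4 : forall s (t : tm s), norm s (sapp (fun _ => None) s t) = norm s t
}.

Definition efo_branch (norm : forall s, tm s -> tm s) (A : tm o -> Prop) : Prop :=
  forall f, A f -> normal norm f /\ quasi_efo f.

(* Fix a standard model of every finite list of formulas (an arbitrary one if
   the list is not contained in A), and a filter on lists containing each cone
   {l | f in l, l within A}; the filter is built in countably many stages so
   that it decides the truth of each of countably many definable formulas.
   The countable model is a reduced product of these models restricted to
   the families of values named by countably many codes, taken modulo
   agreement on a set of the filter: sorts are interpreted by such classes,
   o by bool and function types by full function spaces, so the model is
   standard with countable sorts.  A logical relation between families and
   elements of this model is preserved by every EFO term, so an EFO formula
   true in the models of almost all lists is true in the model; a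
   disequation of EFO terms is handled by the fact that families related to
   the same element agree almost everywhere. *)

From Stdlib Require Import List PeanoNat Eqdep_dec Classical ClassicalEpsilon
  FunctionalExtensionality PropExtensionality ProofIrrelevance IndefiniteDescription Cantor.

Lemma ev_inv (F : frame) (I : asg F) s (t : tm s) v (H : ev F I s t v) :
  match t in tm s return D F s -> Prop with
  | TN x => fun v => v = I x
  | TA u w => fun v => exists f a, ev F I _ u f /\ ev F I _ w a /\ v = app F f a
  | TL x b => fun v => forall a, ev F (upd F I x a) _ b (app F v a)
  end v.
Proof. destruct H; eauto. Qed.

Lemma ev_functional (F : frame) s (t : tm s) (I : asg F) v v' :
  ev F I s t v -> ev F I s t v' -> v = v'.
Proof.
  revert I v v'; induction t as [x | s t u IHu w IHw | x t b IHb]; intros I v v' H H';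
    apply ev_inv in H; apply ev_inv in H'; simpl in H, H'.
  - congruence.
  - destruct H as (f & a & Hf & Ha & ->), H' as (f' & a' & Hf' & Ha' & ->).
    now rewrite (IHu _ _ _ Hf Hf'), (IHw _ _ _ Ha Ha').
  - apply app_ext; intro a; exact (IHb _ _ _ (H a) (H' a)).
Qed.

Lemma ev_total_standard (F : frame) (HF : standard F) s (t : tm s) (I : asg F) :
  exists v, ev F I s t v.
Proof.
  revert I; induction t as [x | s t u IHu w IHw | x t b IHb]; intro I.
  - eexists; constructor.
  - destruct (IHu I) as [f Hf], (IHw I) as [a Ha]; eexists; econstructor; eauto.
  - destruct (functional_choice _ (fun a => IHb (upd F I x a))) as [h Hh].
    destruct (HF _ _ h) as [f Hf].
    exists f; constructor; intro a; rewrite Hf; apply Hh.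
Qed.

Definition value (F : frame) (HF : standard F) (I : asg F) s (t : tm s) : D F s :=
  proj1_sig (constructive_indefinite_description _ (ev_total_standard F HF s t I)).

Lemma value_ev F HF I s t : ev F I s t (value F HF I s t).
Proof.
  exact (proj2_sig (constructive_indefinite_description _ (ev_total_standard F HF s t I))).
Qed.

Lemma value_of_ev F HF I s t v : ev F I s t v -> value F HF I s t = v.
Proof. apply ev_functional, value_ev. Qed.

Section Quotient.

Variables (T : Type) (R : T -> T -> Prop).
Hypotheses (R_sym : forall x y, R x y -> R y x)
  (R_trans : forall x y z, R x y -> R y z -> R x z).

Definition quot : Type := { X : T -> Prop | exists x, X = R x }.

Definition class (x : T) : quot := exist _ (R x) (ex_intro _ x eq_refl).

Lemma class_eq x y : R x y -> class x = class y.
Proof.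
  intro Rxy; apply subset_eq_compat, functional_extensionality; intro z.
  apply propositional_extensionality; split; eauto.
Qed.

Lemma class_inj x y : R y y -> class x = class y -> R x y.
Proof. intros Ryy E; apply (f_equal (@proj1_sig _ _)) in E; simpl in E; now rewrite E. Qed.

Lemma class_surj (q : quot) : exists x, q = class x.
Proof.
  destruct q as [X [x ->]]; exists x; now apply subset_eq_compat.
Qed.

Lemma quot_countable (x0 : T) (enc : T -> nat) :
  (forall x y, enc x = enc y -> x = y) -> (forall x, R x x) -> countable_type quot.
Proof.
  intros enc_inj R_refl.
  exists (fun q => enc (epsilon (inhabits x0) (proj1_sig q))); intros q q' E.
  destruct (class_surj q) as [x ->], (class_surj q') as [y ->]; simpl in E.
  apply enc_inj in E.
  assert (Rx := epsilon_spec (inhabits x0) (R x) (ex_intro _ x (R_refl x))).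
  assert (Ry := epsilon_spec (inhabits x0) (R y) (ex_intro _ y (R_refl y))).
  rewrite E in Rx; eauto using class_eq.
Qed.

End Quotient.

Definition cpair (x y : nat) : nat := Cantor.to_nat (x, y).

Lemma cpair_inj x y x' y' : cpair x y = cpair x' y' -> x = x' /\ y = y'.
Proof. intro E; apply (Cantor.to_nat_inj (x, y) (x', y')) in E; now injection E. Qed.

Lemma existT_ty_inj (P : ty -> Type) s (x y : P s) : existT P s x = existT P s y -> x = y.
Proof. apply inj_pair2_eq_dec, ty_eq_dec. Qed.

Fixpoint enc_ty (s : ty) : nat :=
  match s with
  | TBase b => cpair 0 b
  | TArr s t => cpair 1 (cpair (enc_ty s) (enc_ty t))
  end.

Lemma enc_ty_inj s s' : enc_ty s = enc_ty s' -> s = s'.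
Proof.
  revert s'; induction s; destruct s'; simpl; intro E;
    apply cpair_inj in E as [E1 E2]; try discriminate.
  - now subst.
  - apply cpair_inj in E2 as [E2 E3]; f_equal; auto.
Qed.

Definition enc_name (x : name) : nat :=
  match x with
  | NNeg => cpair 0 0
  | NImp => cpair 1 0
  | NEq s => cpair 2 (enc_ty s)
  | NAll a => cpair 3 a
  | NVar s n => cpair 4 (cpair (enc_ty s) n)
  end.

Lemma enc_name_inj x x' : enc_name x = enc_name x' -> x = x'.
Proof.
  destruct x, x'; simpl; intro E; apply cpair_inj in E as [E1 E2]; try discriminate;
    try apply cpair_inj in E2 as [E2 E3]; f_equal; auto using enc_ty_inj.
Qed.

Fixpoint enc_tm {s} (t : tm s) : nat :=
  match t with
  | TN x => cpair 0 (enc_name x)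
  | TA u w => cpair 1 (cpair (enc_tm u) (enc_tm w))
  | TL x b => cpair 2 (cpair (enc_name x) (enc_tm b))
  end.

Lemma enc_tm_inj s (t : tm s) s' (t' : tm s') :
  enc_tm t = enc_tm t' -> existT tm s t = existT tm s' t'.
Proof.
  revert s' t'; induction t as [x | s t u IHu w IHw | x t b IHb]; intros s' t';
    destruct t' as [x' | s' t' u' w' | x' t' b']; simpl; intro E;
    apply cpair_inj in E as [E1 E2]; try discriminate;
    try apply cpair_inj in E2 as [E2 E3].
  - now apply enc_name_inj in E2 as ->.
  - apply IHu in E2; apply IHw in E3.
    assert (Ety := f_equal (@projT1 _ _) E2); simpl in Ety; injection Ety as -> ->.
    apply existT_ty_inj in E2 as ->; apply existT_ty_inj in E3 as ->; reflexivity.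
  - apply enc_name_inj in E2 as ->; apply IHb in E3.
    assert (Ety := f_equal (@projT1 _ _) E3); simpl in Ety; subst t'.
    now apply existT_ty_inj in E3 as ->.
Qed.

(* Names for the definable families of values: values of terms, applications,
   an argument on which two functions differ (interpreted by [CDiff], needed to
   separate distinct functions) and a counterexample to a predicate on a sort
   (interpreted by [CWit], needed for the quantifiers). *)
Inductive code : ty -> Type :=
| CTm (s : ty) (t : tm s) : code s
| CApp (s t : ty) : code (TArr s t) -> code s -> code t
| CDiff (s t : ty) : code (TArr s t) -> code (TArr s t) -> code s
| CWit (a : nat) : code (TArr (sort a) o) -> code (sort a).

Fixpoint enc_code {s} (c : code s) : nat :=
  match c with
  | CTm _ t => cpair 0 (enc_tm t)
  | CApp _ _ c1 c2 => cpair 1 (cpair (enc_code c1) (enc_code c2))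
  | CDiff _ _ c1 c2 => cpair 2 (cpair (enc_code c1) (enc_code c2))
  | CWit _ c => cpair 3 (enc_code c)
  end.

Lemma enc_code_inj_dep s (c : code s) s' (c' : code s') :
  enc_code c = enc_code c' -> existT code s c = existT code s' c'.
Proof.
  revert s' c'; induction c as [s t | s t c1 IH1 c2 IH2 | s t c1 IH1 c2 IH2 | a c IH];
    intros s' c'; destruct c'; simpl; intro E;
    apply cpair_inj in E as [E1 E2]; try discriminate;
    try apply cpair_inj in E2 as [E2 E3].
  - apply enc_tm_inj in E2.
    assert (Ety := f_equal (@projT1 _ _) E2); simpl in Ety; subst.
    now apply existT_ty_inj in E2 as ->.
  - apply IH1 in E2; apply IH2 in E3.
    assert (Ety := f_equal (@projT1 _ _) E2); simpl in Ety; injection Ety as -> ->.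
    apply existT_ty_inj in E2 as ->; apply existT_ty_inj in E3 as ->; reflexivity.
  - apply IH1 in E2; apply IH2 in E3.
    assert (Ety := f_equal (@projT1 _ _) E2); simpl in Ety; injection Ety as -> ->.
    apply existT_ty_inj in E2 as ->; apply existT_ty_inj in E3 as ->; reflexivity.
  - apply IH in E2.
    assert (Ety := f_equal (@projT1 _ _) E2); simpl in Ety; injection Ety as ->.
    now apply existT_ty_inj in E2 as ->.
Qed.

Lemma enc_code_inj s (c c' : code s) : enc_code c = enc_code c' -> c = c'.
Proof. intro E; apply existT_ty_inj, enc_code_inj_dep, E. Qed.

Section Witnesses.

Variable F : frame.

Definition distinguishing_arg {s t} (f g : D F (TArr s t)) : D F s :=
  epsilon (D_ne F s) (fun a => app F f a <> app F g a).

Lemma distinguishing_arg_spec s t (f g : D F (TArr s t)) :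
  f <> g -> app F f (distinguishing_arg f g) <> app F g (distinguishing_arg f g).
Proof.
  intro Hfg; unfold distinguishing_arg; apply epsilon_spec.
  apply not_all_not_ex; intro Hall; apply Hfg, app_ext; intro a.
  now apply NNPP.
Qed.

Definition counterexample (tv : D F o -> bool) {a} (p : D F (TArr (sort a) o)) : D F (sort a) :=
  epsilon (D_ne F (sort a)) (fun z => tv (app F p z) = false).

Lemma counterexample_spec tv a (p : D F (TArr (sort a) o)) :
  (exists z, tv (app F p z) = false) -> tv (app F p (counterexample tv p)) = false.
Proof. exact (epsilon_spec _ (fun z => tv (app F p z) = false)). Qed.

End Witnesses.

Record filter {L : Type} (U : (L -> Prop) -> Prop) : Prop := {
  filter_top : U (fun _ => True);
  filter_mono : forall Y Y', U Y -> (forall l, Y l -> Y' l) -> U Y';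
  filter_meet : forall Y Y', U Y -> U Y' -> U (fun l => Y l /\ Y' l);
  filter_proper : ~ U (fun _ => False) }.

Section FilterFacts.

Variables (L : Type) (U : (L -> Prop) -> Prop).
Hypothesis U_filter : filter U.

Lemma filter_mono2 (Y Y' Z : L -> Prop) :
  U Y -> U Y' -> (forall l, Y l -> Y' l -> Z l) -> U Z.
Proof.
  intros HY HY' HZ; apply (filter_mono _ U_filter _ _ (filter_meet _ U_filter _ _ HY HY')).
  intros l []; auto.
Qed.

Lemma filter_disjoint (Y Y' : L -> Prop) :
  U Y -> U Y' -> (forall l, Y l -> Y' l -> False) -> False.
Proof. intros HY HY' H; apply (filter_proper _ U_filter), (filter_mono2 _ _ _ HY HY' H). Qed.

End FilterFacts.

Section ReducedProduct.

Variables (L : Type) (F : L -> frame) (I : forall l, asg (F l))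
  (tv : forall l, D (F l) o -> bool).
Hypotheses (F_std : forall l, standard (F l))
  (I_logical : forall l, logical (F l) (I l) (tv l)).

Definition fam s : Type := forall l, D (F l) s.

Definition fapp {s t} (p : fam (TArr s t)) (z : fam s) : fam t :=
  fun l => app (F l) (p l) (z l).

Definition true_at (p : fam o) (l : L) : Prop := tv l (p l) = true.

Fixpoint cval {s} (c : code s) : fam s :=
  match c in code s return fam s with
  | CTm s t => fun l => value (F l) (F_std l) (I l) s t
  | CApp _ _ c1 c2 => fapp (cval c1) (cval c2)
  | CDiff _ _ c1 c2 => fun l => distinguishing_arg (F l) (cval c1 l) (cval c2 l)
  | CWit _ c => fun l => counterexample (F l) (tv l) (cval c l)
  end.

Definition definable {s} (p : fam s) : Prop := exists c : code s, p = cval c.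

Lemma definable_fapp s t (p : fam (TArr s t)) (z : fam s) :
  definable p -> definable z -> definable (fapp p z).
Proof. intros [c ->] [cz ->]; now exists (CApp _ _ c cz). Qed.

Definition vfam (E : forall l, asg (F l)) s (t : tm s) : fam s :=
  fun l => value (F l) (F_std l) (E l) s t.

Lemma vfam_TN E x : vfam E _ (TN x) = fun l => E l x.
Proof. apply functional_extensionality_dep; intro l; apply value_of_ev; constructor. Qed.

Lemma vfam_TA E s t (u : tm (TArr s t)) (w : tm s) :
  vfam E t (TA u w) = fapp (vfam E _ u) (vfam E _ w).
Proof.
  apply functional_extensionality_dep; intro l; apply value_of_ev.
  econstructor; apply value_ev.
Qed.

Lemma vfam_TL E x t (b : tm t) (z : fam (ntype x)) :
  fapp (vfam E _ (TL x b)) z = vfam (fun l => upd (F l) (E l) x (z l)) t b.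
Proof.
  apply functional_extensionality_dep; intro l; symmetry; apply value_of_ev.
  exact (ev_inv _ _ _ _ _ (value_ev (F l) (F_std l) (E l) _ (TL x b)) (z l)).
Qed.

Lemma definable_name x : definable (fun l => I l x).
Proof. exists (CTm _ (TN x)); symmetry; apply vfam_TN. Qed.

Definition code_truth (k : nat) (l : L) : Prop :=
  exists c : code o, enc_code c = k /\ true_at (cval c) l.

Lemma code_truth_enc c l : code_truth (enc_code c) l <-> true_at (cval c) l.
Proof.
  split; [|now exists c].
  intros (c' & E & H); now apply enc_code_inj in E as ->.
Qed.

Section Logical.

Variable l : L.

Lemma tv_inj v w : tv l v = tv l w -> v = w.
Proof. apply (I_logical l). Qed.

Lemma tv_neg a : tv l (app (F l) (I l NNeg) a) = negb (tv l a).
Proof. apply (I_logical l). Qed.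

Lemma tv_imp a b :
  tv l (app (F l) (app (F l) (I l NImp) a) b) = implb (tv l a) (tv l b).
Proof. apply (I_logical l). Qed.

Lemma tv_eq s (a b : D (F l) s) :
  tv l (app (F l) (app (F l) (I l (NEq s)) a) b) = true <-> a = b.
Proof. apply (I_logical l). Qed.

Lemma tv_all al (f : D (F l) (TArr (sort al) o)) :
  tv l (app (F l) (I l (NAll al)) f) = true <-> forall a, tv l (app (F l) f a) = true.
Proof. apply (I_logical l). Qed.

End Logical.

Section Filtered.

Variable U : (L -> Prop) -> Prop.
Hypotheses (U_filter : filter U)
  (U_decides : forall k, U (code_truth k) \/ U (fun l => ~ code_truth k l)).

Lemma U_decides_code (c : code o) :
  U (true_at (cval c)) \/ U (fun l => ~ true_at (cval c) l).
Proof.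
  destruct (U_decides (enc_code c)) as [H | H]; [left | right];
    apply (filter_mono _ U_filter _ _ H); intro l; rewrite code_truth_enc; auto.
Qed.

Definition ceq s (c c' : code s) : Prop := U (fun l => cval c l = cval c' l).

Lemma ceq_refl s (c : code s) : ceq s c c.
Proof. apply (filter_mono _ U_filter _ _ (filter_top _ U_filter)); auto. Qed.

Lemma ceq_sym s (c c' : code s) : ceq s c c' -> ceq s c' c.
Proof. intro H; apply (filter_mono _ U_filter _ _ H); auto. Qed.

Lemma ceq_trans s (c1 c2 c3 : code s) : ceq s c1 c2 -> ceq s c2 c3 -> ceq s c1 c3.
Proof. intros H H'; apply (filter_mono2 _ _ U_filter _ _ _ H H'); congruence. Qed.

Definition Dsort a : Type := quot (code (sort a)) (ceq (sort a)).

Definition sort_class {a} (c : code (sort a)) : Dsort a := class _ (ceq (sort a)) c.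

Fixpoint Dm (s : ty) : Type :=
  match s with
  | TBase 0 => bool
  | TBase (S a) => Dsort a
  | TArr s t => Dm s -> Dm t
  end.

Fixpoint Dm_default (s : ty) : Dm s :=
  match s return Dm s with
  | TBase 0 => true
  | TBase (S a) => sort_class (CTm (sort a) (TN (NVar (sort a) 0)))
  | TArr s t => fun _ => Dm_default t
  end.

Fixpoint rel (s : ty) : fam s -> Dm s -> Prop :=
  match s return fam s -> Dm s -> Prop with
  | TBase 0 => fun p b => definable p /\ (b = true <-> U (true_at p))
  | TBase (S a) => fun p d => exists c, p = cval c /\ d = sort_class c
  | TArr s t => fun p g =>
      definable p /\ forall z x, rel s z x -> rel t (fapp p z) (g x)
  end.

Lemma rel_definable s p x : rel s p x -> definable p.
Proof.
  destruct s as [[|a] | s t]; simpl; [tauto | | tauto].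
  intros (c & -> & _); now exists c.
Qed.

Lemma rel_bool p b : rel o p b ->
  (b = true /\ U (true_at p)) \/ (b = false /\ U (fun l => ~ true_at p l)).
Proof.
  intros [[c ->] Hb]; destruct (U_decides_code c) as [H | H]; [left | right].
  - split; [now apply Hb | exact H].
  - split; [|exact H]. destruct b; [|reflexivity]. exfalso.
    apply (filter_disjoint _ _ U_filter _ _ (proj1 Hb eq_refl) H); auto.
Qed.

Definition rel_total s := forall c : code s, exists x, rel s (cval c) x.
Definition rel_agree s :=
  forall p p' x, rel s p x -> rel s p' x -> U (fun l => p l = p' l).
Definition rel_respects s :=
  forall p p' x, rel s p x -> definable p' -> U (fun l => p l = p' l) -> rel s p' x.

Lemma rel_props_o : rel_total o /\ rel_agree o /\ rel_respects o.
Proof.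
  split; [|split].
  - intro c; destruct (classic (U (true_at (cval c)))) as [H | H].
    + exists true; split; [now exists c | tauto].
    + exists false; split; [now exists c | split; [discriminate | tauto]].
  - intros p p' x Hp Hp'.
    destruct (rel_bool _ _ Hp) as [[-> H] | [-> H]], (rel_bool _ _ Hp') as [[E H'] | [E H']];
      try discriminate; apply (filter_mono2 _ _ U_filter _ _ _ H H'); intros l Hl Hl';
      apply (tv_inj l); unfold true_at in *.
    + congruence.
    + now destruct (tv l (p l)), (tv l (p' l)).
  - intros p p' x [_ Hx] Hdef E; split; [exact Hdef|]. rewrite Hx.
    split; intro H; apply (filter_mono2 _ _ U_filter _ _ _ H E); unfold true_at;
      intros l Hl El; congruence.
Qed.

Lemma rel_props_sort a :
  rel_total (sort a) /\ rel_agree (sort a) /\ rel_respects (sort a).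
Proof.
  split; [|split].
  - intro c; now exists (sort_class c), c.
  - intros p p' d (c & -> & ->) (c' & -> & E).
    exact (class_inj _ _ _ _ (ceq_refl _ c') E).
  - intros p p' d (c & -> & ->) [c' ->] E; exists c'; split; [reflexivity|].
    apply class_eq; [apply ceq_sym | apply ceq_trans | exact E].
Qed.

Lemma rel_total_arrow s t :
  rel_agree s -> rel_total t -> rel_respects t -> rel_total (TArr s t).
Proof.
  intros agree_s total_t respects_t c.
  exists (fun x => epsilon (inhabits (Dm_default t))
    (fun y => exists cz, rel s (cval cz) x /\ rel t (cval (CApp _ _ c cz)) y)).
  split; [now exists c|]. intros z x Hzx.
  destruct (rel_definable _ _ _ Hzx) as [cz' ->].
  destruct (epsilon_spec (inhabits (Dm_default t))
    (fun y => exists cz, rel s (cval cz) x /\ rel t (cval (CApp _ _ c cz)) y))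
    as (cz & Hcz & Hy).
  { destruct (total_t (CApp _ _ c cz')) as [y Hy]; now exists y, cz'. }
  apply (respects_t _ _ _ Hy); [now exists (CApp _ _ c cz')|].
  apply (filter_mono _ U_filter _ _ (agree_s _ _ _ Hcz Hzx)).
  intros l E; simpl; unfold fapp; now rewrite E.
Qed.

Lemma rel_agree_arrow s t : rel_total s -> rel_agree t -> rel_agree (TArr s t).
Proof.
  intros total_s agree_t p p' g [[c ->] Hp] [[c' ->] Hp'].
  destruct (total_s (CDiff _ _ c c')) as [y Hy].
  apply (filter_mono _ U_filter _ _ (agree_t _ _ _ (Hp _ _ Hy) (Hp' _ _ Hy))).
  intros l E; apply NNPP; intro Hne.
  exact (distinguishing_arg_spec _ _ _ _ _ Hne E).
Qed.

Lemma rel_respects_arrow s t : rel_respects t -> rel_respects (TArr s t).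
Proof.
  intros respects_t p p' g [_ Hp] Hdef E; split; [exact Hdef|]; intros z x Hzx.
  apply (respects_t _ _ _ (Hp _ _ Hzx)).
  - exact (definable_fapp _ _ _ _ Hdef (rel_definable _ _ _ Hzx)).
  - apply (filter_mono _ U_filter _ _ E); intros l El; unfold fapp; now rewrite El.
Qed.

Lemma rel_props s : rel_total s /\ rel_agree s /\ rel_respects s.
Proof.
  induction s as [[|a] | s [Ts [As Rs]] t [Tt [At Rt]]].
  - exact rel_props_o.
  - exact (rel_props_sort a).
  - split; [|split]; auto using rel_total_arrow, rel_agree_arrow, rel_respects_arrow.
Qed.

Definition model_frame : frame := {|
  D := Dm;
  D_ne := fun s => inhabits (Dm_default s);
  app := fun s t (f : Dm (TArr s t)) (a : Dm s) => f a;
  app_ext := fun s t f g H => functional_extensionality f g H |}.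

Lemma model_standard : standard model_frame.
Proof. intros s t h; now exists h. Qed.

Definition bool_of (P : Prop) : bool := if excluded_middle_informative P then true else false.

Lemma bool_of_true (P : Prop) : bool_of P = true <-> P.
Proof. unfold bool_of; destruct (excluded_middle_informative P); intuition discriminate. Qed.

Definition model_asg : asg model_frame :=
  fun x => match x return Dm (ntype x) with
  | NNeg => negb
  | NImp => implb
  | NEq s => fun a b => bool_of (a = b)
  | NAll a => fun f => bool_of (forall d, f d = true)
  | NVar s n => epsilon (inhabits (Dm_default s)) (rel s (cval (CTm s (TN (NVar s n)))))
  end.

Lemma model_logical : logical model_frame model_asg (fun b => b).
Proof.
  split; [auto|]; split; [intro b; now exists b|].
  split; [reflexivity|]; split; [reflexivity|].
  split; intros; apply bool_of_true.
Qed.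

Lemma rel_neg : rel _ (fun l => I l NNeg) (model_asg NNeg).
Proof.
  split; [apply (definable_name NNeg)|]; intros z b Hzb.
  split; [apply definable_fapp; [apply (definable_name NNeg) | exact (rel_definable _ _ _ Hzb)]|].
  unfold true_at, fapp; simpl.
  destruct (rel_bool _ _ Hzb) as [[-> HT] | [-> HF]]; simpl; split; intro H.
  - discriminate.
  - exfalso; apply (filter_disjoint _ _ U_filter _ _ H HT); intros l Hl Hl'.
    unfold true_at in Hl'; rewrite tv_neg, Hl' in Hl; discriminate.
  - apply (filter_mono _ U_filter _ _ HF); intros l Hl.
    rewrite tv_neg; unfold true_at in Hl; now destruct (tv l (z l)).
  - reflexivity.
Qed.

Lemma rel_imp : rel _ (fun l => I l NImp) (model_asg NImp).
Proof.
  split; [apply (definable_name NImp)|]; intros z1 b1 H1.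
  split; [apply definable_fapp; [apply (definable_name NImp) | exact (rel_definable _ _ _ H1)]|].
  intros z2 b2 H2.
  split; [apply definable_fapp; [apply definable_fapp; [apply (definable_name NImp)|]|];
          eapply rel_definable; eauto|].
  unfold true_at, fapp; simpl.
  destruct (rel_bool _ _ H1) as [[-> HT1] | [-> HF1]].
  - destruct (rel_bool _ _ H2) as [[-> HT2] | [-> HF2]]; simpl; split; intro H.
    + apply (filter_mono _ U_filter _ _ HT2); intros l E; unfold true_at in E.
      rewrite tv_imp, E; now destruct (tv l (z1 l)).
    + reflexivity.
    + discriminate.
    + exfalso; apply (filter_disjoint _ _ U_filter _ _ H (filter_meet _ U_filter _ _ HT1 HF2)).
      intros l E [E1 E2]; unfold true_at in *; rewrite tv_imp, E1 in E; auto.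
  - simpl; split; intros _; [|reflexivity].
    apply (filter_mono _ U_filter _ _ HF1); intros l E; unfold true_at in E.
    rewrite tv_imp; now destruct (tv l (z1 l)).
Qed.

Lemma rel_eq a : rel _ (fun l => I l (NEq (sort a))) (model_asg (NEq (sort a))).
Proof.
  split; [apply (definable_name (NEq (sort a)))|]; intros z1 d1 (c1 & -> & ->).
  split; [apply definable_fapp; [apply (definable_name (NEq (sort a))) | now exists c1]|].
  intros z2 d2 (c2 & -> & ->).
  split; [apply definable_fapp; [apply definable_fapp; [apply (definable_name (NEq (sort a)))|]|];
          [now exists c1 | now exists c2]|].
  simpl; rewrite bool_of_true; split; intro H.
  - apply class_inj in H; [|apply ceq_refl].
    apply (filter_mono _ U_filter _ _ H); intros l E; now apply tv_eq.
  - apply class_eq; [apply ceq_sym | apply ceq_trans|].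
    apply (filter_mono _ U_filter _ _ H); intros l E; now apply tv_eq in E.
Qed.

Lemma rel_all al : rel _ (fun l => I l (NAll al)) (model_asg (NAll al)).
Proof.
  split; [apply (definable_name (NAll al))|]; intros p f Hpf.
  split; [apply definable_fapp;
          [apply (definable_name (NAll al)) | exact (rel_definable _ _ _ Hpf)]|].
  destruct Hpf as [[c ->] Hf].
  simpl; rewrite bool_of_true; split; intro H.
  - assert (Hw := proj2 (Hf _ (sort_class (CWit al c)) (ex_intro _ (CWit al c)
      (conj eq_refl eq_refl)))).
    apply (filter_mono _ U_filter _ _ (proj1 Hw (H _))); intros l E; apply tv_all.
    intro a0; destruct (tv l (app (F l) (cval c l) a0)) eqn:Ea; [reflexivity|].
    unfold true_at, fapp in E; simpl in E.
    now rewrite (counterexample_spec _ _ _ _ (ex_intro _ a0 Ea)) in E.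
  - intro d; destruct (class_surj _ _ d) as [c' ->].
    apply (proj2 (Hf _ _ (ex_intro _ c' (conj eq_refl eq_refl)))).
    apply (filter_mono _ U_filter _ _ H); intros l E; now apply tv_all.
Qed.

Lemma rel_var s n : rel s (fun l => I l (NVar s n)) (model_asg (NVar s n)).
Proof.
  rewrite <- vfam_TN; exact (epsilon_spec _ _ (proj1 (rel_props s) (CTm s (TN (NVar s n))))).
Qed.

Definition definable_env (E : forall l, asg (F l)) : Prop :=
  forall s (t : tm s), definable (vfam E s t).

Definition env_rel (E : forall l, asg (F l)) (J : asg model_frame) : Prop :=
  forall x, name_efo x = true -> rel (ntype x) (fun l => E l x) (J x).

Lemma definable_env_I : definable_env I.
Proof. intros s t; now exists (CTm s t). Qed.

Lemma env_rel_I : env_rel I model_asg.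
Proof.
  intros [| | s | al | s n] Hx;
    [exact rel_neg | exact rel_imp | | exact (rel_all al) | exact (rel_var s n)].
  destruct s as [[|a] | s t]; try discriminate; exact (rel_eq a).
Qed.

Lemma rel_efo s (t : tm s) : efo t = true ->
  forall E J, definable_env E -> env_rel E J ->
  forall w, ev model_frame J s t w -> rel s (vfam E s t) w.
Proof.
  induction t as [x | s t u IHu w IHw | x t b IHb]; simpl;
    intros Ht E J HE HJ v Hv; apply ev_inv in Hv; simpl in Hv.
  - subst v; rewrite vfam_TN; now apply HJ.
  - apply andb_prop in Ht as [Hu Hw].
    destruct Hv as (f & a & Hf & Ha & ->); rewrite vfam_TA.
    exact (proj2 (IHu Hu E J HE HJ _ Hf) _ _ (IHw Hw E J HE HJ _ Ha)).
  - apply andb_prop in Ht as [Hx Hb].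
    split; [apply HE|]; intros z d Hzd; rewrite vfam_TL.
    apply (IHb Hb _ (upd model_frame J x d)); [| |apply Hv].
    + intros s' t'; rewrite <- vfam_TL.
      exact (definable_fapp _ _ _ _ (HE _ (TL x t')) (rel_definable _ _ _ Hzd)).
    + intros y Hy; unfold upd; destruct (name_eq_dec x y) as [<- | _]; [exact Hzd|].
      now apply HJ.
Qed.

Lemma vfam_neq E s (a b : tm s) l :
  vfam E o (neq a b) l =
  app (F l) (E l NNeg) (app (F l) (app (F l) (E l (NEq s)) (vfam E s a l)) (vfam E s b l)).
Proof.
  apply value_of_ev.
  exact (ev_A _ _ _ _ _ _ _ _ (ev_N _ _ NNeg) (ev_A _ _ _ _ _ _ _ _
    (ev_A _ _ _ _ _ _ _ _ (ev_N _ _ (NEq s)) (value_ev _ _ _ _ a)) (value_ev _ _ _ _ b))).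
Qed.

Lemma ev_model_efo (f : tm o) :
  efo f = true -> U (true_at (vfam I o f)) -> ev model_frame model_asg o f true.
Proof.
  intros Hf HU.
  destruct (ev_total_standard _ model_standard o f model_asg) as [w Hw].
  destruct (rel_efo o f Hf I model_asg definable_env_I env_rel_I w Hw) as [_ Hiff].
  apply Hiff in HU; now subst w.
Qed.

Lemma ev_model_neq s (a b : tm s) : efo a = true -> efo b = true ->
  U (true_at (vfam I o (neq a b))) -> ev model_frame model_asg o (neq a b) true.
Proof.
  intros Ha Hb HU.
  destruct (ev_total_standard _ model_standard s a model_asg) as [va Hva].
  destruct (ev_total_standard _ model_standard s b model_asg) as [vb Hvb].
  assert (Hv : ev model_frame model_asg o (neq a b) (negb (bool_of (va = vb))))
    by exact (ev_A _ _ _ _ _ _ _ _ (ev_N _ _ NNeg)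
               (ev_A _ _ _ _ _ _ _ _ (ev_A _ _ _ _ _ _ _ _ (ev_N _ _ (NEq s)) Hva) Hvb)).
  destruct (classic (va = vb)) as [<- | Hne].
  - exfalso.
    assert (Hab := proj1 (proj2 (rel_props s)) _ _ _
      (rel_efo s a Ha _ _ definable_env_I env_rel_I _ Hva)
      (rel_efo s b Hb _ _ definable_env_I env_rel_I _ Hvb)).
    apply (filter_disjoint _ _ U_filter _ _ HU Hab); intros l Hl E.
    unfold true_at in Hl; rewrite vfam_neq, E, tv_neg in Hl.
    now rewrite (proj2 (tv_eq l s _ _) eq_refl) in Hl.
  - enough (bool_of (va = vb) = false) as E by (rewrite E in Hv; exact Hv).
    destruct (bool_of (va = vb)) eqn:E; [exfalso; now apply Hne, bool_of_true | reflexivity].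
Qed.

Lemma ev_model_quasi_efo f :
  quasi_efo f -> U (true_at (vfam I o f)) -> ev model_frame model_asg o f true.
Proof.
  intros [Hf | (s & a & b & Ha & Hb & ->)]; [apply ev_model_efo | apply ev_model_neq]; auto.
Qed.

Lemma model_countable_sort al : countable_type (D model_frame (sort al)).
Proof.
  exact (quot_countable _ _ (ceq_sym _) (ceq_trans _) (CTm _ (TN (NVar _ 0))) enc_code
           (enc_code_inj _) (ceq_refl _)).
Qed.

Lemma reduced_product_model (B : tm o -> Prop) :
  (forall f, B f -> quasi_efo f /\ U (true_at (vfam I o f))) ->
  exists (G : frame) (J : asg G) (tvG : D G o -> bool),
    std_model B G J tvG /\ forall al, countable_type (D G (sort al)).
Proof.
  intro HB; exists model_frame, model_asg, (fun b => b).
  split; [|exact model_countable_sort].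
  split; [exact model_standard | split; [exact model_logical|]].
  intros f Hf; exists true; split; [|reflexivity].
  destruct (HB f Hf); now apply ev_model_quasi_efo.
Qed.

End Filtered.

End ReducedProduct.

Section ListFilter.

Variables (T : Type) (A : T -> Prop) (X : nat -> list T -> Prop).

Definition within (l : list T) : Prop := forall x, In x l -> A x.

Definition cofinal (Y : list T -> Prop) : Prop :=
  forall c, within c -> exists l, incl c l /\ Y l.

(* Stage [k+1] keeps [X k] if this stays cofinal, and its complement
   otherwise; the complement is then cofinal as well. *)
Fixpoint stage (k : nat) : list T -> Prop :=
  match k with
  | 0 => within
  | S k => fun l => stage k l /\
      if excluded_middle_informative (cofinal (fun l => stage k l /\ X k l))
      then X k l else ~ X k l
  end.

Lemma stage_cofinal k : cofinal (stage k).
Proof.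
  induction k as [|k IH]; simpl.
  - intros c Hc; exists c; split; [apply incl_refl | exact Hc].
  - destruct (excluded_middle_informative _) as [H | H]; [exact H|].
    intros c Hc; apply not_all_ex_not in H as [c1 H].
    apply imply_to_and in H as [Hc1 H].
    destruct (IH (c ++ c1)) as (l & Hl & Hst).
    { intros x Hx; apply in_app_or in Hx as [Hx | Hx]; auto. }
    exists l; split; [now apply incl_app_inv in Hl as []|].
    split; [exact Hst|]; intro HX; apply H.
    exists l; split; [now apply incl_app_inv in Hl as [] | now split].
Qed.

Lemma stage_antitone k k' l : k <= k' -> stage k' l -> stage k l.
Proof. induction 1; [auto | intros [Hs _]; auto]. Qed.

Definition stage_filter (Y : list T -> Prop) : Prop :=
  exists k c, within c /\ forall l, stage k l -> incl c l -> Y l.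

Lemma stage_filter_filter : filter stage_filter.
Proof.
  constructor.
  - now exists 0, nil.
  - intros Y Y' (k & c & Hc & H) HY; exists k, c; auto.
  - intros Y Y' (k & c & Hc & H) (k' & c' & Hc' & H').
    exists (Nat.max k k'), (c ++ c'); split.
    + intros x Hx; apply in_app_or in Hx as [Hx | Hx]; auto.
    + intros l Hl Hi; apply incl_app_inv in Hi as [Hi Hi']; split.
      * apply H; [apply (stage_antitone _ _ _ (Nat.le_max_l k k') Hl) | exact Hi].
      * apply H'; [apply (stage_antitone _ _ _ (Nat.le_max_r k k') Hl) | exact Hi'].
  - intros (k & c & Hc & H).
    destruct (stage_cofinal k c Hc) as (l & Hl & Hst); exact (H l Hst Hl).
Qed.

Lemma stage_filter_decides k : stage_filter (X k) \/ stage_filter (fun l => ~ X k l).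
Proof.
  destruct (excluded_middle_informative (cofinal (fun l => stage k l /\ X k l))) as [H | H];
    [left | right]; exists (S k), nil; split; try easy; intros l [_ Hl] _;
    destruct (excluded_middle_informative _) as [H' | H']; tauto.
Qed.

Lemma stage_filter_cone x : A x -> stage_filter (fun l => In x l /\ within l).
Proof.
  intro Hx; exists 0, (x :: nil); split.
  - now intros y [<- | []].
  - intros l Hl Hi; split; [apply Hi; now left | exact Hl].
Qed.

End ListFilter.

Lemma finite_models_family (A : tm o -> Prop)
  (Hfin : forall l : list (tm o), within _ A l -> has_std_model (fun f => In f l)) :
  exists (F : list (tm o) -> frame) (I : forall l, asg (F l))
         (tv : forall l, D (F l) o -> bool),
    (forall l, standard (F l)) /\ (forall l, logical (F l) (I l) (tv l)) /\
    forall l, within _ A l -> forall f, In f l -> exists v, ev (F l) (I l) o f v /\ tv l v = true.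
Proof.
  assert (Hmod : forall l, exists M : {F : frame & {I : asg F & D F o -> bool}},
    std_model (fun f => within _ A l /\ In f l) (projT1 M) (projT1 (projT2 M)) (projT2 (projT2 M))).
  { intro l; destruct (classic (within _ A l)) as [Hl | Hl].
    - destruct (Hfin l Hl) as (F & I & tv & Hs & Hlog & Hm).
      exists (existT _ F (existT _ I tv)); split; [|split]; auto.
      intros f [_ Hf]; auto.
    - destruct (Hfin nil ltac:(easy)) as (F & I & tv & Hs & Hlog & _).
      exists (existT _ F (existT _ I tv)); split; [|split]; auto; tauto. }
  destruct (functional_choice _ Hmod) as [M HM].
  exists (fun l => projT1 (M l)), (fun l => projT1 (projT2 (M l))),
    (fun l => projT2 (projT2 (M l))).
  split; [|split]; intro l; [apply HM | apply HM |].
  intros Hl f Hf; apply HM; auto.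
Qed.

Theorem theorem14p6
  (norm : forall s, tm s -> tm s) (sapp : subst -> forall s, tm s -> tm s)
  (Hnorm : normalizer norm) (Hsubst : subst_op norm sapp)
  (A : tm o -> Prop) (HA : efo_branch norm A)
  (Hfin : forall l : list (tm o), (forall f, In f l -> A f) ->
          has_std_model (fun f => In f l)) :
  exists (F : frame) (I : asg F) (tv : D F o -> bool),
    std_model A F I tv /\ forall al : nat, countable_type (D F (sort al)).
Proof.
  destruct (finite_models_family A Hfin) as (F & I & tv & Hstd & Hlog & Hmod).
  set (X := code_truth _ F I tv Hstd).
  apply (reduced_product_model _ F I tv Hstd Hlog (stage_filter _ A X)).
  - apply stage_filter_filter.
  - apply stage_filter_decides.
  - intros f Hf; split; [apply (HA f Hf)|].
    apply (filter_mono _ (stage_filter_filter _ A X) _ _ (stage_filter_cone _ A X f Hf)).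
    intros l [Hin Hl]; destruct (Hmod l Hl f Hin) as (v & Hv & Htv).
    unfold true_at, vfam; now rewrite (value_of_ev _ _ _ _ _ _ Hv).
Qed.
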